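(* For each $d\ge1$ let $B$ be a random $d\times d$ matrix with independent entries $B_{ij}\in\{0,1\}$, $\mathbb P(B_{ij}=1)=1/d$. For a positive integer $k$, let $P(k)$ be the set of set partitions of $\{1,\dots,k\}$, and let $S_k=\{(1,1),(2,1),(2,2),(3,2),\dots,(k,k),(1,k)\}$, i.e. the pairs $(t,t)$ and $(t+1,t)$ for $t=1,\dots,k$ with indices taken mod $k$ (so $k+1\equiv1$). For a pair $p_i,p_j\in P(k)$ let $p_{ij}$ be the partition of $S_k$ in which $(a_1,b_1)$ and $(a_2,b_2)$ lie in the same block if and only if $a_1,a_2$ lie in the same block of $p_i$ and $b_1,b_2$ lie in the same block of $p_j$. Writing $|p|$ for the number of blocks of a partition $p$, the $k$-th moment of the limiting averaged spectral distribution of $BB^t$, $$m_k=\lim_{d\to\infty}\frac1d\,\mathbb E_B\operatorname{tr}\big[(BB^t)^k\big],$$ equals the number of pairs $(p_i,p_j)\in P(k)\times P(k)$ with $|p_i|+|p_j|-|p_{ij}|=1$.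
   Context: $B$ is called a Bernoulli random matrix with parameter $p=1/d$; the eigenvalues of $BB^t$ are the squared singular values of $B$. *)

From HB Require Import structures.
From mathcomp Require Import all_boot all_order all_algebra.
From mathcomp Require Import all_classical all_reals.
From mathcomp Require Import topology normedtype sequences.
Set Implicit Arguments. Unset Strict Implicit. Unset Printing Implicit Defensive.
Import Order.TTheory GRing.Theory Num.Theory.
Local Open Scope ring_scope.

Definition bmx (R : pzRingType) {d : nat} (B : 'M[bool]_d) : 'M[R]_d :=
  \matrix_(i, j) (B i j)%:R.

Definition bern_prob (R : realType) {d : nat} (B : 'M[bool]_d) : R :=
  \prod_(i < d) \prod_(j < d) (if B i j then d%:R^-1 else 1 - d%:R^-1).

Definition avg_moment (R : realType) (k d : nat) : R :=
  \sum_(B : 'M[bool]_d)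
     bern_prob R B * (d%:R^-1 * \tr ((bmx R B *m (bmx R B)^T) ^+ k)).

(* set partitions of {1,...,k}, encoded on 'I_k = {0,...,k-1} *)
Definition setpart (k : nat) (P : {set {set 'I_k}}) : bool :=
  finset.partition P [set: 'I_k].

Definition Sk (k : nat) : {set 'I_k * 'I_k} :=
  [set x | (x.1 == x.2) || (x.1 == ordS x.2)].

Definition pij (k : nat) (pi pj : {set {set 'I_k}}) : {set {set 'I_k * 'I_k}} :=
  finset.equivalence_partition
    (fun x y : 'I_k * 'I_k =>
       (finset.pblock pi x.1 == finset.pblock pi y.1) && (finset.pblock pj x.2 == finset.pblock pj y.2))
    (Sk k).

Definition count_pairs (k : nat) : nat :=
  #|[set pq : {set {set 'I_k}} * {set {set 'I_k}} |
      [&& setpart pq.1, setpart pq.2 &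
          ((#|pq.1|%:Z + #|pq.2|%:Z - #|pij pq.1 pq.2|%:Z)%R == 1%:Z)]]|.

(* Expanding the trace, (1/d) E tr (B B^T)^k is (1/d) times a sum, over closed walks
   i_1 j_1 i_2 j_2 ... i_k j_k alternating between row and column indices, of the
   probability d^-|E| that all the visited entries E = {(i_a, j_b) : (a, b) in S_k} of B
   equal 1.  Grouping the row indices i and the column indices j by the partitions p_i,
   p_j they induce on {1..k} gives |E| = |p_ij|, and there are d^_|p_i| * d^_|p_j|, about
   d^(|p_i| + |p_j|), such walks; so each pair of partitions contributes
   d^(|p_i| + |p_j| - |p_ij| - 1) in the limit.  The entries visited by a closed walk are
   the edges of a connected bipartite graph on |p_i| + |p_j| vertices, hence
   |p_i| + |p_j| <= |p_ij| + 1, and the contribution tends to 1 when equality holds and to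
   0 otherwise. *)

From HB Require Import structures.
From mathcomp Require Import all_boot all_order all_algebra.
From mathcomp Require Import all_classical all_reals.
From mathcomp Require Import topology normedtype sequences.
From mathcomp Require Import zify.
Import Order.TTheory GRing.Theory Num.Theory.
Import numFieldNormedType.Exports.
Set Implicit Arguments. Unset Strict Implicit. Unset Printing Implicit Defensive.

Lemma eq_in_equivalence_partition (T : finType) (R1 R2 : rel T) (D : {set T}) :
  {in D &, R1 =2 R2} -> equivalence_partition R1 D = equivalence_partition R2 D.
Proof.
move=> eqR; apply: eq_in_imset => x Dx; apply/setP => y; rewrite !inE.
by case Dy: (y \in D) => //=; apply: eqR.
Qed.

Lemma card_preim_partition (T rT : finType) (f : T -> rT) (D : {set T}) :
  #|preim_partition f D| = #|f @: D|.
Proof.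
have ->: preim_partition f D = (fun v => [set y in D | f y == v]) @: (f @: D).
  rewrite /preim_partition /equivalence_partition -imset_comp.
  by apply: eq_imset => x /=; apply/setP => y; rewrite !inE eq_sym.
rewrite card_in_imset // => u v /imsetP[x Dx ->] /imsetP[y Dy ->] /setP eq_uv.
by have := eq_uv x; rewrite !inE Dx eqxx /= => /esym/eqP.
Qed.

Definition ker_partition (D : finType) (T : eqType) (f : D -> T) : {set {set D}} :=
  preim_partition f [set: D].

Lemma ker_partitionP (D : finType) (T : eqType) (f : D -> T) :
  finset.partition (ker_partition f) [set: D].
Proof. exact: preim_partitionP. Qed.

Lemma eq_pblock_ker_partition (D : finType) (T : eqType) (f : D -> T) a b :
  (finset.pblock (ker_partition f) a == finset.pblock (ker_partition f) b) = (f a == f b).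
Proof.
have P := ker_partitionP f.
rewrite eq_pblock ?(partition_trivIset P) ?(cover_partition P) ?inE //.
by rewrite pblock_equivalence_partition ?inE //; split=> // /eqP->.
Qed.

Definition walk_edges k (T1 T2 : finType) (i : 'I_k -> T1) (j : 'I_k -> T2) :=
  [set (i x.1, j x.2) | x in Sk k].

Lemma card_pij_ker_partition k (T1 T2 : finType) (i : 'I_k -> T1) (j : 'I_k -> T2) :
  #|pij (ker_partition i) (ker_partition j)| = #|walk_edges i j|.
Proof.
rewrite /walk_edges -(card_preim_partition (fun x => (i x.1, j x.2))).
suff ->: pij (ker_partition i) (ker_partition j)
  = preim_partition (fun x => (i x.1, j x.2)) (Sk k) by [].
by apply: eq_in_equivalence_partition => x y _ _; rewrite !eq_pblock_ker_partition.
Qed.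

Lemma card_ffun_ker_partition k n (P : {set {set 'I_k.+1}}) : setpart P ->
  #|[set f : {ffun 'I_k.+1 -> 'I_n} | ker_partition f == P]| = n ^_ #|P|.
Proof.
move=> partP; pose B := {X : {set 'I_k.+1} | X \in P}.
have pblockP a : finset.pblock P a \in P.
  by apply: pblock_mem; rewrite (cover_partition partP) inE.
pose blk a : B := exist _ (finset.pblock P a) (pblockP a).
pose rep (X : B) := odflt ord0 [pick a in val X].
have repP (X : B) : rep X \in val X.
  rewrite /rep; case: pickP => [//|noX]; have /set0Pn[a Xa] := partition_neq0 partP (valP X).
  by have := noX a; rewrite Xa.
have blk_rep X : blk (rep X) = X.
  by apply: val_inj; apply: def_pblock (partition_trivIset partP) (valP X) (repP X).
pose lift_blocks (g : {ffun B -> 'I_n}) := [ffun a => g (blk a)].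
have lift_inj : injective lift_blocks.
  by move=> g g' /ffunP eq_gg'; apply/ffunP => X; have := eq_gg' (rep X); rewrite !ffunE blk_rep.
rewrite -[#|P|]card_sig -[n in n ^_ _]card_ord -card_inj_ffuns -(card_imset _ lift_inj).
apply: eq_card => f; rewrite inE; apply/eqP/imsetP => [kerf|[g]].
  have eq_f a b : (f a == f b) = (blk a == blk b).
    by rewrite -eq_pblock_ker_partition kerf -val_eqE.
  exists [ffun X => f (rep X)].
    by rewrite inE; apply/injectiveP => X Y; rewrite !ffunE => /eqP; rewrite eq_f !blk_rep => /eqP.
  by apply/ffunP => a; rewrite !ffunE; apply/eqP; rewrite eq_f blk_rep.
rewrite inE => /injectiveP inj_g ->; rewrite -[RHS](preim_partition_pblock partP).
by apply: eq_in_equivalence_partition => a b _ _; rewrite !ffunE (inj_eq inj_g) -val_eqE.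
Qed.

Section ZigzagWalk.
Variables (T1 T2 : finType) (x : nat -> T1) (y : nat -> T2).

Fixpoint zigzag_left m : {set T1} := if m is m'.+1 then x m |: zigzag_left m' else [set x 0].
Fixpoint zigzag_right m : {set T2} :=
  if m is m'.+1 then y m' |: zigzag_right m' else finset.set0.
Fixpoint zigzag_edges m : {set T1 * T2} :=
  if m is m'.+1 then (x m, y m') |: ((x m', y m') |: zigzag_edges m') else finset.set0.

Lemma mem_zigzag_left m t : (t <= m)%N -> x t \in zigzag_left m.
Proof.
elim: m => [|m IHm] /=; first by rewrite leqn0 => /eqP->; rewrite inE.
by rewrite leq_eqVlt ltnS => /predU1P[->|/IHm]; rewrite !inE ?eqxx // => ->; rewrite orbT.
Qed.

Lemma mem_zigzag_right m t : (t < m)%N -> y t \in zigzag_right m.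
Proof.
elim: m => [|m IHm] //=.
by rewrite ltnS leq_eqVlt => /predU1P[->|/IHm]; rewrite !inE ?eqxx // => ->; rewrite orbT.
Qed.

Lemma zigzag_edge_ends m e :
  e \in zigzag_edges m -> (e.1 \in zigzag_left m) && (e.2 \in zigzag_right m).
Proof.
elim: m e => [|m IHm] e /=; first by rewrite [e \in _]finset.in_set0.
rewrite !inE => /predU1P[->|/predU1P[->|/IHm/andP[-> ->]]]; rewrite /= ?eqxx ?orbT //.
by rewrite mem_zigzag_left ?orbT.
Qed.

(* Each step adds one edge and at most one new vertex. *)
Lemma card_zigzag_le m :
  (#|zigzag_left m| + #|zigzag_right m| <= #|zigzag_edges m| + 1)%N.
Proof.
elim: m => [|m IHm] /=; first by rewrite cards1 !finset.cards0.
rewrite !cardsU1.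
have new_right : ((y m \notin zigzag_right m) <= ((x m, y m) \notin zigzag_edges m))%N.
  by case E: (_ \in zigzag_edges m); rewrite ?leq_b1 //; case/andP: (zigzag_edge_ends E) => _ ->.
have new_left : ((x m.+1 \notin zigzag_left m)
    <= ((x m.+1, y m) \notin (x m, y m) |: zigzag_edges m))%N.
  case E: (_ \in _ |: _); rewrite ?leq_b1 //.
  by move: E; rewrite !inE => /predU1P[[->]|/zigzag_edge_ends/andP[-> _]]; rewrite ?mem_zigzag_left.
by move: IHm new_right new_left; do 4 case: (_ \notin _); lia.
Qed.

Lemma zigzag_edges_sub (E : {set T1 * T2}) m :
  (forall t, (x t, y t) \in E) -> (forall t, (x t.+1, y t) \in E) -> zigzag_edges m \subset E.
Proof.
move=> Ediag Esub; elim: m => [|m IHm] /=; first exact: finset.sub0set.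
by rewrite !finset.subUset !finset.sub1set Ediag Esub IHm.
Qed.

End ZigzagWalk.

Lemma card_walk_vertices_le k (T1 T2 : finType) (i : 'I_k.+1 -> T1) (j : 'I_k.+1 -> T2) :
  (#|i @: [set: 'I_k.+1]| + #|j @: [set: 'I_k.+1]| <= #|walk_edges i j| + 1)%N.
Proof.
pose x t := i (inord (t %% k.+1)); pose y t := j (inord (t %% k.+1)).
have inord_mod (a : 'I_k.+1) : inord (a %% k.+1) = a by rewrite modn_small // inord_val.
apply: (leq_trans _ (leq_trans (card_zigzag_le x y k.+1) _)).
  apply: leq_add; apply/subset_leq_card/fintype.subsetP => _ /imsetP[a _ ->];
    rewrite -(inord_mod a); [apply/mem_zigzag_left/ltnW | apply: mem_zigzag_right]; exact: ltn_ord.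
rewrite leq_add2r; apply/subset_leq_card/zigzag_edges_sub => t; apply/imsetP.
  by exists (inord (t %% k.+1), inord (t %% k.+1)); rewrite ?inE ?eqxx.
exists (inord (t.+1 %% k.+1), inord (t %% k.+1)) => //.
rewrite inE; apply/orP; right; apply/eqP/val_inj => /=.
by rewrite !inordK ?ltn_pmod // -addn1 -modnDml addn1.
Qed.

Lemma card_pij_ge k (pi pj : {set {set 'I_k.+1}}) :
  setpart pi -> setpart pj -> (#|pi| + #|pj| <= #|pij pi pj| + 1)%N.
Proof.
move=> parti partj; have := card_walk_vertices_le (finset.pblock pi) (finset.pblock pj).
rewrite -(card_preim_partition (finset.pblock pi)) -(card_preim_partition (finset.pblock pj)).
by rewrite -card_pij_ker_partition /ker_partition !preim_partition_pblock.
Qed.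

Local Open Scope ring_scope.

Section FfunRcons.
Variable T : Type.

Definition ffun_rcons m (y : {ffun 'I_m -> T}) (c : T) : {ffun 'I_m.+1 -> T} :=
  [ffun t => if unlift ord_max t is Some t' then y t' else c].

Lemma ffun_rcons_inord m (y : {ffun 'I_m.+1 -> T}) c t :
  (t <= m)%N -> ffun_rcons y c (inord t) = y (inord t).
Proof.
move=> le_tm; rewrite ffunE; case: unliftP => [t'|] /(congr1 val) /=;
  rewrite inordK ?ltnS ?(leq_trans le_tm) //.
  by rewrite /bump leqNgt (ltn_ord t') add0n => ->; rewrite inord_val.
by move=> eq_t; move: le_tm; rewrite eq_t ltnn.
Qed.

Lemma ffun_rcons_last m (y : {ffun 'I_m.+1 -> T}) c : ffun_rcons y c (inord m.+1) = c.
Proof.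
rewrite ffunE; case: unliftP => [t'|] //= /(congr1 val) /=; rewrite inordK //.
by rewrite /bump leqNgt (ltn_ord t') add0n => eq_t; have := ltn_ord t'; rewrite -eq_t ltnn.
Qed.

End FfunRcons.

Lemma sum_ffun_rcons (V : nmodType) m (T : finType) (F : {ffun 'I_m.+1 -> T} -> V) :
  \sum_x F x = \sum_(y : {ffun 'I_m -> T}) \sum_(c : T) F (ffun_rcons y c).
Proof.
rewrite pair_big /=; pose h (p : {ffun 'I_m -> T} * T) := ffun_rcons p.1 p.2.
have h_bij : bijective h.
  exists (fun x : {ffun 'I_m.+1 -> T} => ([ffun t => x (lift ord_max t)], x ord_max)).
    move=> [y c]; rewrite /h /ffun_rcons /= ffunE unlift_none; congr (_, _).
    by apply/ffunP => t; rewrite !ffunE liftK.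
  move=> x; apply/ffunP => t; rewrite /h /ffun_rcons /= ffunE.
  by case: unliftP => [t' ->|->]; rewrite ?ffunE.
by rewrite (reindex h) //; apply: onW_bij.
Qed.

Section WalkSums.
Variables (R : pzSemiRingType) (d : nat) (M : 'M[R]_d).

Lemma mxpow_walk_sum m a b :
  (M ^+ m) a b = \sum_(x : {ffun 'I_m.+1 -> 'I_d} | (x (inord 0) == a) && (x (inord m) == b))
     \prod_(t < m) M (x (inord t)) (x (inord t.+1)).
Proof.
elim: m a b => [|m IHm] a b.
  rewrite expr0 mxE big_mkcond sum_ffun_rcons.
  have -> : (inord 0 : 'I_1) = ord_max by apply: val_inj; rewrite /= inordK.
  under eq_bigr do under eq_bigr do rewrite /ffun_rcons ffunE unlift_none big_ord0.
  have delta_ab : \sum_(c : 'I_d) (if (c == a) && (c == b) then 1 else 0) = (a == b)%:R :> R.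
    rewrite -big_mkcond; have [<-|neq_ab] := eqVneq a b.
      by under eq_bigl do rewrite andbb; rewrite big_pred1_eq.
    by rewrite big1 // => c /andP[/eqP-> /eqP eq_ab]; rewrite eq_ab eqxx in neq_ab.
  by under eq_bigr do rewrite delta_ab; rewrite sumr_const card_ffun !card_ord.
have walk_rcons (y : {ffun 'I_m.+1 -> 'I_d}) c :
    \prod_(t < m.+1) M (ffun_rcons y c (inord t)) (ffun_rcons y c (inord t.+1))
    = (\prod_(t < m) M (y (inord t)) (y (inord t.+1))) * M (y (inord m)) c.
  rewrite big_ord_recr /= ffun_rcons_inord // ffun_rcons_last; congr (_ * _).
  by apply: eq_bigr => t _; rewrite !ffun_rcons_inord // ltnW.
rewrite exprSr -mulmxE mxE.
under eq_bigr do rewrite IHm mulr_suml big_mkcond.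
rewrite exchange_big /= [RHS]big_mkcond [RHS]sum_ffun_rcons; apply: eq_bigr => y _.
under [RHS]eq_bigr do rewrite ffun_rcons_inord // ffun_rcons_last walk_rcons.
case: (y (inord 0) == a) => /=; last by rewrite !big1.
by rewrite -!big_mkcond big_pred1_eq; under eq_bigl do rewrite eq_sym; rewrite big_pred1_eq.
Qed.

Lemma mxtrace_pow_cycle_sum k :
  \tr (M ^+ k.+1) = \sum_(y : {ffun 'I_k.+1 -> 'I_d}) \prod_(t : 'I_k.+1) M (y t) (y (ordS t)).
Proof.
rewrite /mxtrace; under eq_bigr do rewrite mxpow_walk_sum big_mkcond sum_ffun_rcons.
rewrite exchange_big; apply: eq_bigr => y _ /=.
under eq_bigr do under eq_bigr do rewrite ffun_rcons_inord // ffun_rcons_last.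
transitivity (\sum_(a : 'I_d) if y (inord 0) == a then
    \prod_(t < k.+1) M (ffun_rcons y a (inord t)) (ffun_rcons y a (inord t.+1)) else 0).
  apply: eq_bigr => a _; case: eqP => _ /=; last by rewrite big1.
  by rewrite -big_mkcond big_pred1_eq.
rewrite -big_mkcond; under eq_bigl do rewrite eq_sym.
rewrite big_pred1_eq; apply: eq_bigr => t _.
have le_tk : (t <= k)%N by rewrite -ltnS.
rewrite [X in M X _]ffun_rcons_inord // inord_val.
have ordS_inord : ordS t = inord (t.+1 %% k.+1) by apply: val_inj; rewrite /= inordK ?ltn_pmod.
rewrite ordS_inord; case: (ltnP t k) => [lt_tk|le_kt].
  by rewrite ffun_rcons_inord // modn_small.
have -> : (t : nat) = k by apply/eqP; rewrite eqn_leq le_kt le_tk.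
by rewrite ffun_rcons_last modnn.
Qed.

End WalkSums.

Lemma prodr_nat_bool (R : comPzSemiRingType) (I : finType) (P : pred I) (b : I -> bool) :
  \prod_(i | P i) ((b i)%:R : R) = [forall (i | P i), b i]%:R.
Proof.
case: (boolP [forall (i | P i), b i]) => [/forallP all_b | /forallPn[i]].
  by rewrite big1 // => i Pi; move/implyP: (all_b i) => ->.
by rewrite negb_imply => /andP[Pi /negbTE nbi]; rewrite (bigD1 i) //= nbi mul0r.
Qed.

Lemma sum_mx_prod (R : comPzSemiRingType) m n (T : finType) (H : 'I_m -> 'I_n -> T -> R) :
  \sum_(A : 'M[T]_(m, n)) \prod_i \prod_j H i j (A i j) = \prod_i \prod_j \sum_x H i j x.
Proof.
under [RHS]eq_bigr do rewrite bigA_distr_bigA /=.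
rewrite bigA_distr_bigA /=.
pose mx_of (f : {ffun 'I_m -> {ffun 'I_n -> T}}) := \matrix_(i, j) f i j.
have mx_of_bij : bijective mx_of.
  exists (fun A : 'M[T]_(m, n) => [ffun i => [ffun j => A i j]]).
    by move=> f; apply/ffunP => i; apply/ffunP => j; rewrite !ffunE mxE.
  by move=> A; apply/matrixP => i j; rewrite mxE !ffunE.
rewrite (reindex mx_of) /=; last exact: onW_bij.
by apply: eq_bigr => f _; apply: eq_bigr => i _; apply: eq_bigr => j _; rewrite mxE.
Qed.

Lemma bern_prob_all_ones (R : realType) d (E : {set 'I_d * 'I_d}) :
  \sum_(B : 'M[bool]_d) bern_prob R B * [forall e in E, B e.1 e.2]%:R = (d%:R^-1) ^+ #|E|.
Proof.
set q : R := d%:R^-1.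
pose H i j (b : bool) : R := (if b then q else 1 - q) * (if (i, j) \in E then b%:R else 1).
transitivity (\sum_(B : 'M[bool]_d) \prod_i \prod_j H i j (B i j)).
  apply: eq_bigr => B _; under [RHS]eq_bigr do rewrite big_split /=.
  rewrite big_split /= -prodr_nat_bool; congr (_ * _).
  by rewrite [RHS]pair_big big_mkcond; apply: eq_bigr => -[i j].
rewrite sum_mx_prod pair_big -prodr_const [RHS]big_mkcond /=.
apply: eq_bigr => -[i j] _; rewrite big_bool /H /=.
by case: ifP; rewrite ?mulr1 ?mulr0 ?addr0 // addrC subrK.
Qed.

Lemma prod_walk_entries (R : comPzSemiRingType) k d (B : 'M[bool]_d) (y j : 'I_k -> 'I_d) :
  \prod_t (((B (y t) (j t))%:R : R) * (B (y (ordS t)) (j t))%:R)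
  = [forall e in walk_edges y j, B e.1 e.2]%:R.
Proof.
under eq_bigr do rewrite -natrM mulnb.
rewrite prodr_nat_bool; congr (nat_of_bool _)%:R; apply/forallP/forall_inP => /= [all_B e|all_B t].
  by case/imsetP=> -[a b]; rewrite inE => /orP[] /eqP-> ->; have /andP[] := all_B b.
by apply/andP; split; apply: (all_B (_, _)); apply/imsetP;
  [exists (t, t) | exists (ordS t, t)]; rewrite ?inE ?eqxx ?orbT.
Qed.

Lemma avg_moment_walk_sum (R : realType) k d :
  avg_moment R k.+1 d = d%:R^-1 * \sum_(y : {ffun 'I_k.+1 -> 'I_d})
     \sum_(j : {ffun 'I_k.+1 -> 'I_d}) (d%:R^-1) ^+ #|walk_edges y j|.
Proof.
have trace_walks (B : 'M[bool]_d) : \tr ((bmx R B *m (bmx R B)^T) ^+ k.+1) =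
    \sum_(y : {ffun 'I_k.+1 -> 'I_d}) \sum_(j : {ffun 'I_k.+1 -> 'I_d})
       [forall e in walk_edges y j, B e.1 e.2]%:R.
  rewrite mxtrace_pow_cycle_sum; apply: eq_bigr => y _.
  under eq_bigr do rewrite mxE.
  rewrite bigA_distr_bigA; apply: eq_bigr => j _.
  by rewrite -prod_walk_entries; apply: eq_bigr => t _; rewrite !mxE.
rewrite /avg_moment; under eq_bigr do rewrite trace_walks mulrCA.
rewrite -mulr_sumr; congr (_ * _).
under eq_bigr do rewrite mulr_sumr; rewrite exchange_big; apply: eq_bigr => y _.
under eq_bigr do rewrite mulr_sumr; rewrite exchange_big; apply: eq_bigr => j _.
exact: bern_prob_all_ones.
Qed.

Lemma sum_ker_partition (R : pzSemiRingType) k d (F : {set {set 'I_k.+1}} -> R) :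
  \sum_(y : {ffun 'I_k.+1 -> 'I_d}) F (ker_partition y) =
  \sum_(P | setpart P) (d ^_ #|P|)%:R * F P.
Proof.
rewrite (partition_big (fun y : {ffun _ -> _} => ker_partition y) (@setpart k.+1)) /=; last first.
  by move=> y _; apply: ker_partitionP.
apply: eq_bigr => P partP; rewrite mulr_natl -(card_ffun_ker_partition d partP) -sumr_const.
by apply: eq_big => [y|y /eqP->]; rewrite ?inE.
Qed.

Lemma avg_moment_partition_sum (R : realType) k d :
  avg_moment R k.+1 d = \sum_(pi : {set {set 'I_k.+1}} | setpart pi) \sum_(pj | setpart pj)
    (d ^_ #|pi|)%:R * (d ^_ #|pj|)%:R * (d%:R^-1 * (d%:R^-1) ^+ #|pij pi pj|).
Proof.
set q : R := d%:R^-1; rewrite avg_moment_walk_sum.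
under eq_bigr => y _ do under eq_bigr => j _ do rewrite -card_pij_ker_partition.
under eq_bigr => y _ do rewrite (sum_ker_partition d (fun pj => q ^+ #|pij (ker_partition y) pj|)).
rewrite (sum_ker_partition d
  (fun pi => \sum_(pj | setpart pj) (d ^_ #|pj|)%:R * q ^+ #|pij pi pj|)).
rewrite mulr_sumr; apply: eq_bigr => pi _; rewrite mulrCA !mulr_sumr; apply: eq_bigr => pj _.
by rewrite -/q [q * _]mulrCA mulrA.
Qed.

Local Open Scope classical_set_scope.

Lemma cvg_sum (K : numFieldType) (V : normedModType K) (T I : Type)
    (F : set_system T) {FF : Filter F} (r : seq I) (P : pred I) (f : I -> T -> V) (l : I -> V) :
  (forall i, P i -> f i x @[x --> F] --> l i) ->
  \sum_(i <- r | P i) f i x @[x --> F] --> \sum_(i <- r | P i) l i.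
Proof. by move=> cvg_f; apply: cvg_big => //; apply: add_continuous. Qed.

Lemma cvgX (K : numFieldType) (T : Type) (F : set_system T) {FF : Filter F}
    (f : T -> K) (a : K) m :
  f @ F --> a -> (fun x => f x ^+ m) @ F --> a ^+ m.
Proof.
move=> cvg_f; elim: m => [|m IHm]; first by under eq_fun do rewrite expr0; exact: cvg_cst.
by rewrite exprS; under eq_fun do rewrite exprS; exact: cvgM.
Qed.

Section FallingFactorialLimits.
Variable R : realType.

Lemma cvg_natrB_ratio a : (((n.+1 - a)%:R : R) / n.+1%:R) @[n --> \oo] --> (1 : R).
Proof.
have cvg_1B : (1 - a%:R * n.+1%:R^-1 : R) @[n --> \oo] --> (1 : R).
  rewrite -[X in _ --> X]subr0 -(mulr0 a%:R).
  exact: cvgB (cvg_cst _) (cvgM (cvg_cst _) cvg_harmonic).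
apply: cvg_trans cvg_1B; apply: near_eq_cvg; near=> n.
have le_an : (a <= n.+1)%N by near: n; exists a => // m /= /leqW.
by rewrite natrB // mulrBl divff ?mul1r ?pnatr_eq0.
Unshelve. all: by end_near.
Qed.

Lemma cvg_ffact_ratio a : (((n.+1 ^_ a)%:R : R) / n.+1%:R ^+ a) @[n --> \oo] --> (1 : R).
Proof.
elim: a => [|a IHa]; first by under eq_fun do rewrite ffactn0 expr0 divr1; exact: cvg_cst.
under eq_fun do rewrite ffactnSr natrM exprSr invfM mulrACA.
by have := cvgM IHa (cvg_natrB_ratio a); rewrite mulr1; apply.
Qed.

Lemma cvg_ffact_pow_term a b c : (a + b <= c + 1)%N ->
  (((n.+1 ^_ a)%:R : R) * (n.+1 ^_ b)%:R * (n.+1%:R^-1 * (n.+1%:R^-1) ^+ c))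
     @[n --> \oo] --> (((a + b == c + 1)%N)%:R : R).
Proof.
move=> le_ab_c1; set e := (c + 1 - (a + b))%N.
have c1E : c.+1 = (a + b + e)%N by rewrite /e; lia.
have termE n : ((n.+1 ^_ a)%:R : R) * (n.+1 ^_ b)%:R * (n.+1%:R^-1 * (n.+1%:R^-1) ^+ c)
    = ((n.+1 ^_ a)%:R / n.+1%:R ^+ a) * ((n.+1 ^_ b)%:R / n.+1%:R ^+ b) * (n.+1%:R^-1) ^+ e.
  rewrite -exprS c1E !exprD -!exprVn.
  by rewrite !mulrA; congr (_ * _); rewrite -!mulrA; congr (_ * _); rewrite mulrCA.
under eq_fun do rewrite termE.
have -> : ((a + b == c + 1)%N)%:R = 1 * 1 * 0 ^+ e :> R.
  by rewrite !mul1r expr0n /e; congr (nat_of_bool _)%:R; apply/eqP/eqP; lia.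
apply: cvgM; first exact: cvgM (cvg_ffact_ratio a) (cvg_ffact_ratio b).
exact: cvgX cvg_harmonic.
Qed.

End FallingFactorialLimits.

Lemma count_pairsE (R : pzSemiRingType) k :
  ((count_pairs k)%:R : R) = \sum_(pi : {set {set 'I_k}} | setpart pi) \sum_(pj | setpart pj)
     ((#|pi| + #|pj| == #|pij pi pj| + 1)%N)%:R.
Proof.
rewrite pair_big /= /count_pairs -sum1_card natr_sum [LHS]big_mkcond [RHS]big_mkcond.
apply: eq_bigr => -[pi pj] _; rewrite inE /=.
have -> : (#|pi|%:Z + #|pj|%:Z - #|pij pi pj|%:Z == 1%:Z)%R =
    (#|pi| + #|pj| == #|pij pi pj| + 1)%N by apply/eqP/eqP; lia.
by case: (setpart pi); case: (setpart pj); case: (_ == _).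
Qed.

Theorem proposition1 (R : realType) (k : nat) (hk : (0 < k)%N) :
  (fun n : nat => avg_moment R k n.+1) @ \oo --> ((count_pairs k)%:R : R).
Proof.
case: k hk => [//|k] _; rewrite count_pairsE.
under eq_fun do rewrite avg_moment_partition_sum.
apply: cvg_sum => pi parti; apply: cvg_sum => pj partj.
exact: cvg_ffact_pow_term (card_pij_ge parti partj).
Qed.
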